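(* Let $U$ be an infinite complex matrix (rows and columns indexed by positive integers) with finitely many nonzero entries in every row and every column, and suppose $U^*U=I$. Then the rows of $U$ are pairwise orthogonal if and only if every row of $U$ has norm $0$ or $1$.
   Context: $U^*$ denotes the Hermitian conjugate of $U$; $I$ is the infinite identity matrix; for rows $r_i,r_k$, $\langle r_k|r_i\rangle=\sum_j u_{kj}^*u_{ij}$ and $\|r_i\|^2=\langle r_i|r_i\rangle$. *)

From HB Require Import structures.
From mathcomp Require Import all_boot all_order all_algebra.
From mathcomp Require Import complex.
From mathcomp Require Import reals.
Set Implicit Arguments. Unset Strict Implicit. Unset Printing Implicit Defensive.
Import Order.TTheory GRing.Theory Num.Theory.
Local Open Scope ring_scope.

(* Infinite matrices indexed by nat (index 0 plays the role of 1). *)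
Definition infmx (C : Type) := nat -> nat -> C.

Section InfMx.
Variable C : numClosedFieldType.

Definition fin_supp (f : nat -> C) : Prop :=
  exists N : nat, forall k, (N <= k)%N -> f k = 0.

Definition has_fsum (f : nat -> C) (s : C) : Prop :=
  exists N : nat, (forall k, (N <= k)%N -> f k = 0) /\ s = \sum_(k < N) f k.

Definition row_col_finite (U : infmx C) : Prop :=
  (forall i, fin_supp (fun j => U i j)) /\ (forall j, fin_supp (fun i => U i j)).

Definition adjoint_mul_id (U : infmx C) : Prop :=
  forall i j, has_fsum (fun k => (U k i)^* * U k j) (if i == j then 1 else 0).

Definition row_inner_is (U : infmx C) (k i : nat) (s : C) : Prop :=
  has_fsum (fun j => (U k j)^* * U i j) s.

Definition rows_orthogonal (U : infmx C) : Prop :=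
  forall i k, i <> k -> row_inner_is U k i 0.

(* ||r_i||^2 = <r_i|r_i> is 0 or 1 (equivalently ||r_i|| is 0 or 1) *)
Definition rows_norm01 (U : infmx C) : Prop :=
  forall i, row_inner_is U i i 0 \/ row_inner_is U i i 1.

End InfMx.

From HB Require Import structures.
From mathcomp Require Import all_boot all_order all_algebra.
From mathcomp Require Import complex.
From mathcomp Require Import reals.
Set Implicit Arguments. Unset Strict Implicit. Unset Printing Implicit Defensive.
Import Order.TTheory GRing.Theory Num.Theory.
Local Open Scope ring_scope.

(* Fix a row r_i. Since the columns of U are orthonormal, expanding
   sum_k |<r_k|r_i>|^2 and summing over k first gives the Bessel-type identity
     |<r_i|r_i>|^2 + sum_(k <> i) |<r_k|r_i>|^2 = <r_i|r_i>.
   Hence r_i is orthogonal to every other row iff ||r_i||^4 = ||r_i||^2,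
   i.e. iff ||r_i|| is 0 or 1. *)

Section FiniteSums.
Variable C : numClosedFieldType.
Implicit Types (f : nat -> C) (s : C).

Lemma big_ord_widen_vanish f N M : (forall k, (N <= k)%N -> f k = 0) ->
  (N <= M)%N -> \sum_(k < M) f k = \sum_(k < N) f k.
Proof.
move=> f0 NM; rewrite -!(big_mkord xpredT) (big_cat_nat (leq0n N) NM) /=.
rewrite [X in _ + X]big1_seq ?addr0 // => k /andP[_].
by rewrite mem_index_iota => /andP[/f0].
Qed.

Lemma has_fsumE f s M : has_fsum f s -> (forall k, (M <= k)%N -> f k = 0) ->
  s = \sum_(k < M) f k.
Proof.
move=> [N [f0N ->]] f0M.
rewrite -(big_ord_widen_vanish f0N (leq_maxl N M)).
by rewrite (big_ord_widen_vanish f0M (leq_maxr N M)).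
Qed.

Lemma sqrnormC_eq_self (x : C) : `|x| ^+ 2 = x -> x = 0 \/ x = 1.
Proof.
rewrite normCK; have [-> | x_neq0] := eqVneq x 0; first by left.
move=> xx'; right; have /(mulfI x_neq0) x'1 : x * x^* = x * 1 by rewrite mulr1.
by rewrite -[x]conjCK x'1 conjC1.
Qed.

Lemma sum_sqrnorm_eq_self_offdiag0P (g : nat -> C) K i :
  (forall k, (K <= k)%N -> g k = 0) -> \sum_(k < K) `|g k| ^+ 2 = g i ->
  (forall k, k != i -> g k = 0) <-> g i = 0 \/ g i = 1.
Proof.
move=> g0 sum_gi; set M := maxn K i.+1.
have g0M k : (M <= k)%N -> g k = 0 by rewrite geq_max => /andP[/g0].
have iM : (i < M)%N by rewrite leq_max ltnSn orbT.
have nrm0 k : (K <= k)%N -> `|g k| ^+ 2 = 0 by move=> /g0 ->; rewrite normr0 expr0n.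
move: sum_gi; rewrite -(big_ord_widen_vanish nrm0 (leq_maxl K i.+1)) -/M.
rewrite (bigD1 (Ordinal iM)) //=; set rest := \sum_(k | _) _ => sum_gi.
have rest_ge0 k : k != Ordinal iM -> 0 <= `|g k| ^+ 2 by rewrite exprn_ge0.
have offdiag0 : rest = 0 -> forall k, k != i -> g k = 0.
  move=> rest0 k ki; have [kM | /g0M //] := ltnP k M.
  apply/eqP; rewrite -normr_eq0 -sqrf_eq0; apply/eqP.
  by apply: (psumr_eq0P rest_ge0 rest0 (i := Ordinal kM)); rewrite -val_eqE.
split=> [offdiag | gi01].
  apply: sqrnormC_eq_self; rewrite -[RHS]sum_gi [rest]big1 ?addr0 // => k.
  by rewrite -val_eqE /= => /offdiag ->; rewrite normr0 expr0n.
apply: offdiag0; apply: (addrI (`|g i| ^+ 2)); rewrite sum_gi addr0.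
by case: gi01 => ->; rewrite ?normr0 ?normr1 ?expr0n ?expr1n.
Qed.

End FiniteSums.

Section RowsOfColumnIsometry.
Variable C : numClosedFieldType.
Variable U : infmx C.
Hypothesis U_fin : row_col_finite U.
Hypothesis U_isometry : adjoint_mul_id U.

Definition row_dot_upto N k i := \sum_(j < N) (U k j)^* * U i j.

Lemma col_supp_bound n :
  exists K, forall j k, (j < n)%N -> (K <= k)%N -> U k j = 0.
Proof.
elim: n => [|n [K IH]]; first by exists 0%N.
have [M Un0] := U_fin.2 n; exists (maxn K M) => j k.
rewrite ltnS leq_eqVlt geq_max => /orP[/eqP -> /andP[_ /Un0] // | jn /andP[Kk _]].
exact: IH.
Qed.

Lemma row_inner_is_upto N k i : (forall j, (N <= j)%N -> U i j = 0) ->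
  row_inner_is U k i (row_dot_upto N k i).
Proof. by move=> Ui0; exists N; split=> // j /Ui0 ->; rewrite mulr0. Qed.

Lemma row_inner_isE N k i s : (forall j, (N <= j)%N -> U i j = 0) ->
  row_inner_is U k i s -> s = row_dot_upto N k i.
Proof. by move=> Ui0 /has_fsumE; apply=> j /Ui0 ->; rewrite mulr0. Qed.

Lemma bessel_row N K i : (forall j, (N <= j)%N -> U i j = 0) ->
  (forall j k, (j < N)%N -> (K <= k)%N -> U k j = 0) ->
  \sum_(k < K) `|row_dot_upto N k i| ^+ 2 = row_dot_upto N i i.
Proof.
move=> Ui0 UK0; rewrite /row_dot_upto.
have col_orth (j j' : 'I_N) :
    \sum_(k < K) (U k j)^* * U k j' = (if j == j' :> nat then 1 else 0).
  rewrite (has_fsumE (M := K) (U_isometry j j')) // => k /(UK0 j) -> //.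
  by rewrite conjC0 mul0r.
under eq_bigr => k _ do rewrite normCK rmorph_sum mulr_suml.
under eq_bigr => k _ do under eq_bigr => j _ do rewrite mulr_sumr.
rewrite exchange_big; apply: eq_bigr => j _ /=; rewrite exchange_big /=.
under eq_bigr => j' _ do
  under eq_bigr => k _ do rewrite rmorphM /= conjCK mulrACA mulrC.
under eq_bigr => j' _ do rewrite -mulr_sumr col_orth.
rewrite (bigD1 j) //= eqxx mulr1 big1 ?addr0; first exact: mulrC.
by move=> j' j'j; rewrite ifN ?mulr0 // eq_sym.
Qed.

Lemma row_orthogonal_iff_norm01 i :
  (forall k, i <> k -> row_inner_is U k i 0) <->
  row_inner_is U i i 0 \/ row_inner_is U i i 1.
Proof.
have [N Ui0] := U_fin.1 i; have [K UK0] := col_supp_bound N.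
set g := fun k => row_dot_upto N k i.
have g0 k : (K <= k)%N -> g k = 0.
  by move=> Kk; apply: big1 => j _; rewrite (UK0 j k) ?conjC0 ?mul0r.
have inner_g k s : row_inner_is U k i s <-> s = g k.
  by split=> [|->]; [apply: row_inner_isE | apply: row_inner_is_upto].
have [to_norm01 to_orth] := sum_sqrnorm_eq_self_offdiag0P g0 (bessel_row Ui0 UK0).
split=> [orth | norm01].
  have /to_norm01[gi | gi] : forall k, k != i -> g k = 0.
    by move=> k /eqP ki; apply/esym/inner_g/orth/nesym.
  - by left; apply/inner_g.
  - by right; apply/inner_g.
have gi01 : g i = 0 \/ g i = 1 by case: norm01 => /inner_g <-; [left | right].
by move=> k /nesym/eqP ki; apply/inner_g; rewrite to_orth.
Qed.

End RowsOfColumnIsometry.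

Local Open Scope complex_scope.

Theorem lemma3 (R : realType) (U : infmx R[i]) :
  row_col_finite U -> adjoint_mul_id U ->
  (rows_orthogonal U <-> rows_norm01 U).
Proof.
move=> U_fin U_isometry.
have row_iff := row_orthogonal_iff_norm01 U_fin U_isometry.
by split=> rows i; [apply/row_iff/rows | apply/row_iff/rows].
Qed.
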